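(* Let $n\ge2$, $A\in\mathbb{R}^{n\times n}$, $B\in\mathbb{R}^n$ with $B\neq0$, and $\mu\in\mathbb{R}$. Let $q\in\mathbb{R}^n$ be a unit vector with $(A-\mu I)q\in\operatorname{span}\{B\}$ and let $Q\in\mathbb{R}^{n\times(n-1)}$ be such that $(q\;\;Q)$ is orthogonal. Put $\bar A=Q^TAQ$, $\bar B=Q^TB$ and $$K_o=\frac{B^T}{B^TB}(A-\mu I)\,qq^T .$$ Then for every $\bar K\in\mathbb{R}^{1\times(n-1)}$ and every $\lambda$, $$\det\big(\lambda I_n-A+B(K_o+\bar KQ^T)\big)=(\lambda-\mu)\,\det\big(\lambda I_{n-1}-\bar A+\bar B\bar K\big).$$ Consequently, if $\bar K$ gives $\bar A-\bar B\bar K$ the eigenvalues $\lambda_2,\dots,\lambda_n$, then $K_o+\bar KQ^T$ gives $A-B(K_o+\bar KQ^T)$ the eigenvalues $\mu,\lambda_2,\dots,\lambda_n$. *)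

From HB Require Import structures.
From mathcomp Require Import all_boot all_order all_algebra.
Set Implicit Arguments. Unset Strict Implicit. Unset Printing Implicit Defensive.
Import Order.TTheory GRing.Theory Num.Theory.
Local Open Scope ring_scope.

Definition Ko (R : fieldType) (n : nat) (A : 'M[R]_n) (B : 'cV[R]_n)
  (mu : R) (q : 'cV[R]_n) : 'rV[R]_n :=
  ((B^T *m B) 0 0)^-1 *: (B^T *m (A - mu%:M) *m q *m q^T).

From HB Require Import structures.
From mathcomp Require Import all_boot all_order all_algebra.
Import Order.TTheory GRing.Theory Num.Theory.
Local Open Scope ring_scope.

Set Implicit Arguments. Unset Strict Implicit.

(* K_o is built so that K q = c where (A - mu I) q = c B, making q an eigenvector
   of A - B K for mu, while K_o Q = 0 gives Q^T (A - B K) Q = Abar - Bbar Kbar.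
   In the orthonormal basis (q Q) the matrix lambda I - (A - B K) is therefore
   block upper triangular, and its determinant is invariant under this change
   of basis. *)

Lemma orthonormal_row_mx (T : pzRingType) n p k (q : 'M[T]_(n, p))
    (Q : 'M[T]_(n, k)) :
  (row_mx q Q)^T *m row_mx q Q = 1%:M ->
  [/\ q^T *m q = 1%:M, q^T *m Q = 0, Q^T *m q = 0 & Q^T *m Q = 1%:M].
Proof.
rewrite tr_row_mx mul_col_mx !mul_mx_row (scalar_mx_block p k 1) -block_mxEv.
by case/eq_block_mx.
Qed.

Lemma det_deflate (T : comPzRingType) k (M : 'M[T]_k.+1) (q : 'cV[T]_k.+1)
    (Q : 'M[T]_(k.+1, k)) (mu x : T) :
  (row_mx q Q)^T *m row_mx q Q = 1%:M -> M *m q = mu *: q ->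
  \det (x%:M - M) = (x - mu) * \det (x%:M - Q^T *m M *m Q).
Proof.
move=> horth heig.
have [hqq _ hQq hQQ] := orthonormal_row_mx horth.
set P := row_mx q Q; set N := x%:M - M.
have hNq : N *m q = (x - mu) *: q.
  by rewrite mulmxBl mul_scalar_mx heig scalerBl.
have -> : \det N = \det (P^T *m N *m P).
  by rewrite !det_mulmx mulrAC -det_mulmx horth det1 mul1r.
have hQNq : Q^T *m N *m q = 0 by rewrite -mulmxA hNq -scalemxAr hQq scaler0.
have hqNq : q^T *m N *m q = (x - mu)%:M.
  by rewrite -mulmxA hNq -scalemxAr hqq scalemx1.
have hQNQ : Q^T *m N *m Q = x%:M - Q^T *m M *m Q.
  by rewrite /N mulmxBr mulmxBl mul_mx_scalar -scalemxAl hQQ scalemx1.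
rewrite /P tr_row_mx mul_col_mx mul_col_row hQNq hqNq hQNQ det_ublock det_mx11.
by rewrite mxE eqxx mulr1n.
Qed.

Lemma char_poly_deflate (T : comNzRingType) k (M : 'M[T]_k.+1) (q : 'cV[T]_k.+1)
    (Q : 'M[T]_(k.+1, k)) (mu : T) :
  (row_mx q Q)^T *m row_mx q Q = 1%:M -> M *m q = mu *: q ->
  char_poly M = ('X - mu%:P) * char_poly (Q^T *m M *m Q).
Proof.
move=> horth heig.
pose Qp := map_mx polyC Q; pose qp := map_mx polyC q.
have horthp : (row_mx qp Qp)^T *m row_mx qp Qp = 1%:M.
  by rewrite -map_row_mx map_trmx -map_mxM horth map_mx1.
have heigp : map_mx polyC M *m qp = mu%:P *: qp.
  by rewrite -map_mxM heig map_mxZ.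
rewrite /char_poly /char_poly_mx (det_deflate 'X horthp heigp).
by rewrite !map_mxM map_trmx.
Qed.

Section Gain.

Variables (R : realFieldType) (n : nat) (A : 'M[R]_n) (B : 'cV[R]_n) (mu : R).
Variables (q : 'cV[R]_n) (c : R).

Lemma trmx_mul_self_eq0 : ((B^T *m B) 0 0 == 0) = (B == 0).
Proof.
apply/idP/eqP => [|->]; last by rewrite mulmx0 mxE.
rewrite mxE psumr_eq0 => [/allP hB|i _]; last by rewrite !mxE -expr2 sqr_ge0.
apply/matrixP => i j; rewrite (ord1 j) !mxE.
by have /= := hB i (mem_index_enum _); rewrite mxE mulf_eq0 orbb => /eqP.
Qed.

Lemma Ko_mul_eigvec :
  B != 0 -> q^T *m q = 1%:M -> (A - mu%:M) *m q = c *: B ->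
  Ko A B mu q *m q = c%:M.
Proof.
rewrite -trmx_mul_self_eq0 => hB hq hspan.
rewrite /Ko -scalemxAl -(mulmxA _ q^T) hq mulmx1 -mulmxA hspan -scalemxAr.
set s := (B^T *m B) 0 0; have -> : B^T *m B = s%:M by apply: mx11_scalar.
by rewrite -scalemx1 !scalerA mulrAC mulVf // mul1r scalemx1.
Qed.

Lemma Ko_mul_orthogonal k (Q : 'M[R]_(n, k)) :
  q^T *m Q = 0 -> Ko A B mu q *m Q = 0.
Proof. by move=> hqQ; rewrite /Ko -scalemxAl -mulmxA hqQ mulmx0 scaler0. Qed.

End Gain.

Theorem mainTheorem11 (R : realFieldType) (n : nat) (hn : (2 <= n)%N)
  (A : 'M[R]_n) (B : 'cV[R]_n) (hB : B != 0) (mu : R)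
  (q : 'cV[R]_n) (Q : 'M[R]_(n, n.-1))
  (hq : q^T *m q = 1%:M)
  (hspan : exists c : R, (A - mu%:M) *m q = c *: B)
  (horth : (row_mx q Q)^T *m (row_mx q Q) = 1%:M) :
  let Abar := Q^T *m A *m Q in
  let Bbar := Q^T *m B in
  forall Kbar : 'rV[R]_(n.-1),
    let K := Ko A B mu q + Kbar *m Q^T in
    [/\ forall lambda : R,
          \det (lambda%:M - A + B *m K)
          = (lambda - mu) * \det (lambda%:M - Abar + Bbar *m Kbar),
        char_poly (A - B *m K) = ('X - mu%:P) * char_poly (Abar - Bbar *m Kbar)
      & forall lam : 'I_(n.-1) -> R,
          char_poly (Abar - Bbar *m Kbar) = \prod_(i < n.-1) ('X - (lam i)%:P) ->
          char_poly (A - B *m K)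
          = ('X - mu%:P) * \prod_(i < n.-1) ('X - (lam i)%:P)].
Proof.
case: n hn => [|[|m]] // _ in A B hB q Q hq hspan horth *.
move=> Abar Bbar Kbar K; case: hspan => c hspan.
have [_ hqQ hQq hQQ] := orthonormal_row_mx horth.
have hKq : K *m q = c%:M.
  by rewrite mulmxDl (Ko_mul_eigvec hB hq hspan) -mulmxA hQq mulmx0 addr0.
have hKQ : K *m Q = Kbar.
  by rewrite mulmxDl Ko_mul_orthogonal // -mulmxA hQQ mulmx1 add0r.
have hAq : A *m q = mu *: q + c *: B.
  by rewrite -hspan mulmxBl mul_scalar_mx addrC subrK.
have heig : (A - B *m K) *m q = mu *: q.
  by rewrite mulmxBl -mulmxA hKq mul_mx_scalar hAq addrK.
have hred : Q^T *m (A - B *m K) *m Q = Abar - Bbar *m Kbar.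
  by rewrite mulmxBr mulmxBl !mulmxA -[_ *m K *m Q]mulmxA hKQ.
have hcp := char_poly_deflate horth heig; rewrite hred in hcp.
split=> [lambda | // | lam <- //].
have subrB k (X Y Z : 'M[R]_k) : X - Y + Z = X - (Y - Z).
  by rewrite opprB addrA addrAC.
by rewrite !subrB (det_deflate _ horth heig) hred.
Qed.
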